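(* Assume $\kappa\ge\|f'\|_{C[-\beta,\beta]}$ and $\|\phi^0\|_\infty\le\beta$. If $$\tau_1\le\Big(\frac{4}{11\varsigma m(\kappa+4\varepsilon^2/h^2)\Gamma(2-\alpha)}\Big)^{1/\alpha},$$ then the $L2$-$1_\sigma$ first-step iterates satisfy $\|\hat\phi^1_{(s)}\|_\infty\le\beta$ for all $s\ge1$. If moreover $$\tau_1\le\Big(\frac{4}{11\kappa(1-\varsigma)m\Gamma(2-\alpha)}\Big)^{1/\alpha},$$ then the iterates converge in $\|\cdot\|_\infty$ to a solution $\hat\phi^1$ of the $L2$-$1_\sigma$ nonlinear first-step equation with $\|\hat\phi^1\|_\infty\le\beta$, and this is its unique solution with $\|\hat\phi^1\|_\infty\le\beta$.
   Context: Setting: $\Omega=(0,L)^2$ with periodic boundary conditions; constants $m>0$, $\varepsilon>0$, $\alpha\in(0,1)$, and $\varsigma:=\alpha/2$. The nonlinearity $f=-F'$ is one of: (double-well) $F(\phi)=\frac14(1-\phi^2)^2$, $f(\phi)=\phi-\phi^3$, with $\beta=1$; or (Flory–Huggins) $F(\phi)=\frac{\theta}{2}[(1+\phi)\ln(1+\phi)+(1-\phi)\ln(1-\phi)]-\frac{\theta_c}{2}\phi^2$, $f(\phi)=\frac{\theta}{2}\ln\frac{1-\phi}{1+\phi}+\theta_c\phi$ on $(-1,1)$, with $\theta_c>\theta>0$ and $\beta\in(0,1)$ the positive root of $f$. In both cases $f(\pm\beta)=0$. Spatial discretization: $M\in\mathbb N$, $h=L/M$; $\mathbb V_h$ is the space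 of real grid functions $v=\{v_{ij}\}_{i,j\in\mathbb Z}$ that are $M$-periodic in each index; $\|v\|_\infty=\max_{1\le i,j\le M}|v_{ij}|$; $\Delta_hv_{ij}=h^{-2}(v_{i+1,j}+v_{i-1,j}+v_{i,j+1}+v_{i,j-1}-4v_{ij})$. Scalar functions act on grid functions pointwise. Time grid $0=t_0<t_1$, $\tau_1=t_1$; $\omega_\mu(t)=t^{\mu-1}/\Gamma(\mu)$. Constant $\kappa\ge0$; $\phi^0\in\mathbb V_h$. First step of the $L2$-$1_\sigma$ schemes: $B^{(1)}_0=\frac1{\tau_1}\int_{0}^{t_{1-\varsigma}}\omega_{1-\alpha}(t_{1-\varsigma}-s)\,ds=\frac{(1-\varsigma)^{1-\alpha}}{\Gamma(2-\alpha)\tau_1^\alpha}$ with $t_{1-\varsigma}=(1-\varsigma)t_1$. The nonlinear first-step equation for $\hat\phi^1\in\mathbb V_h$ is $B^{(1)}_0(\hat\phi^1-\phi^0)=m(\varepsilon^2\Delta_h\hat\phi^{1-\varsigma}+f(\hat\phi^{1-\varsigma}))$ with $\hat\phi^{1-\varsigma}=(1-\varsigma)\hat\phi^1+\varsigma\phi^0$. The first-step iteration is $\hat\phi^1_{(0)}=\phi^0$ and, for $s\ge1$, $B^{(1)}_0(\hat\phi^1_{(s)}-\phi^0)=m(\varepsilon^2\Delta_h\hat\phi^{1-\varsigma}_{(s)}+f(\hat\phi^{1-\varsigma}_{(s-1)})-\kappa(\hat\phi^{1-\varsigma}_{(s)}-\hat\phi^{1-\varsigma}_{(s-1)}))$,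 where $\hat\phi^{1-\varsigma}_{(\ell)}=(1-\varsigma)\hat\phi^1_{(\ell)}+\varsigma\phi^0$. *)

From HB Require Import structures.
From mathcomp Require Import all_boot all_order all_algebra.
From mathcomp Require Import all_classical all_reals all_analysis.
Set Implicit Arguments. Unset Strict Implicit. Unset Printing Implicit Defensive.
Import Order.TTheory GRing.Theory Num.Theory.
Import numFieldNormedType.Exports.
Local Open Scope classical_set_scope.
Local Open Scope ring_scope.

Definition Gamma {R : realType} (x : R) : R :=
  fine (\int[(@lebesgue_measure R)]_(t in `]0%R, +oo[%classic)
          ((t `^ (x - 1)) * expR (- t))%:E)%E.

Definition grid (R : realType) := int -> int -> R.

Definition grid_periodic {R : realType} (M : nat) (v : grid R) : Prop :=
  forall i j : int, v (i + M%:Z) j = v i j /\ v i (j + M%:Z) = v i j.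

Definition normInf {R : realType} (M : nat) (v : grid R) : R :=
  \big[Num.max/0]_(i < M) \big[Num.max/0]_(j < M)
     `| v (i.+1)%:Z (j.+1)%:Z |.

Definition lap {R : realType} (h : R) (v : grid R) : grid R :=
  fun i j => (v (i + 1) j + v (i - 1) j + v i (j + 1) + v i (j - 1)
              - 4 * v i j) / h ^+ 2.

(* The two admissible nonlinearities f = -F' (with their derivative f'). *)
Inductive nonlin := DoubleWell | FloryHuggins.

Definition fnl {R : realType} (c : nonlin) (theta thetac : R) (x : R) : R :=
  match c with
  | DoubleWell => x - x ^+ 3
  | FloryHuggins => theta / 2 * ln ((1 - x) / (1 + x)) + thetac * x
  end.

Definition dfnl {R : realType} (c : nonlin) (theta thetac : R) (x : R) : R :=
  match c with
  | DoubleWell => 1 - 3 * x ^+ 2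
  | FloryHuggins => - theta / (1 - x ^+ 2) + thetac
  end.

Definition nonlin_ok {R : realType} (c : nonlin) (theta thetac beta : R) : Prop :=
  match c with
  | DoubleWell => beta = 1
  | FloryHuggins => 0 < theta /\ theta < thetac /\ 0 < beta /\ beta < 1 /\
                    fnl FloryHuggins theta thetac beta = 0
  end.

Definition B10 {R : realType} (alpha tau1 : R) : R :=
  let vs := alpha / 2 in
  (1 - vs) `^ (1 - alpha) / (Gamma (2 - alpha) * tau1 `^ alpha).

Definition first_step_eq {R : realType} (c : nonlin) (theta thetac m eps alpha tau1 h : R)
    (phi0 phi1 : grid R) : Prop :=
  let vs := alpha / 2 in
  let p := fun i j => (1 - vs) * phi1 i j + vs * phi0 i j in
  forall i j : int,
    B10 alpha tau1 * (phi1 i j - phi0 i j) =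
    m * (eps ^+ 2 * lap h p i j + fnl c theta thetac (p i j)).

Definition first_step_iter {R : realType} (c : nonlin) (theta thetac m eps alpha tau1 h kappa : R)
    (phi0 : grid R) (phi : nat -> grid R) : Prop :=
  let vs := alpha / 2 in
  let p := fun (l : nat) i j => (1 - vs) * phi l i j + vs * phi0 i j in
  phi 0%N = phi0 /\
  forall (s : nat) (i j : int), (1 <= s)%N ->
    B10 alpha tau1 * (phi s i j - phi0 i j) =
    m * (eps ^+ 2 * lap h (p s) i j + fnl c theta thetac (p s.-1 i j)
         - kappa * (p s i j - p s.-1 i j)).

From HB Require Import structures.
From mathcomp Require Import all_boot all_order all_algebra.
From mathcomp Require Import all_classical all_reals all_analysis.
From mathcomp Require Import measurable_realfun ring lra zify.
Set Implicit Arguments. Unset Strict Implicit. Unset Printing Implicit Defensive.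
Import Order.TTheory GRing.Theory Num.Theory.
Import numFieldNormedType.Exports.
Local Open Scope classical_set_scope.
Local Open Scope ring_scope.

(* Solving the linearized step for phi_ij shows that
   (B + m (1 - vs) (kappa + 4 a)) phi_ij, with a = eps^2 / h^2 and B = B^(1)_0,
   is a combination of phi^0_ij, of the four neighbours of the mixed iterate and
   of g(p) = f(p) + kappa p at the mixed previous iterate p, all with nonnegative
   weights once B >= m vs (kappa + 4 a).  As f is kappa-Lipschitz on
   [-beta, beta] and vanishes at +-beta, g maps [-beta, beta] into
   [-kappa beta, kappa beta]; taking the maximum over the grid gives the
   discrete maximum principle.  The same identity for two consecutive steps,
   with g 2 kappa-Lipschitz, makes the iteration a contraction of ratio
   2 m kappa (1 - vs) / (B + m (1 - vs) kappa) < 1 once B > m (1 - vs) kappa;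
   its limit solves the nonlinear equation, and the contraction estimate
   applied to two solutions gives uniqueness.  The time-step restrictions imply
   these two lower bounds on B, because (1 - vs)^(1 - alpha) >= 1/2 and
   Gamma(2 - alpha) > 0. *)

Section GammaPositive.
Variable R : realType.

Lemma measurable_Gamma_integrand (x : R) :
  measurable_fun setT (fun t : R => t `^ (x - 1) * expR (- t)).
Proof.
apply: measurable_funM; first exact: measurable_powR.
by apply: measurableT_comp; [exact: measurable_expR | exact: measurable_funN].
Qed.

Lemma Gamma_integrand_le_exponential_pdf (x t : R) : 1 <= x <= 2 -> 0 < t ->
  t `^ (x - 1) * expR (- t) <= 4 * exponential_pdf (1 / 2) t.
Proof.
move=> /andP[x1 x2] t0.
have pow_le : t `^ (x - 1) <= 1 + t.
  have [t1|t1] := leP t 1.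
    have : t `^ (x - 1) <= t `^ 0 by apply: ger_powR; rewrite ?t0 ?t1 //; lra.
    rewrite powRr0; lra.
  have := @ler1_powR _ t (x - 1) (ltW t1) ltac:(lra); lra.
have lin_le_exp : 1 + t <= 2 * expR (t / 2) by have := expR_ge1Dx (t / 2); lra.
have split_exp : expR (- t) = (expR (t / 2))^-1 * expR (- (1 / 2) * t).
  by rewrite -expRN -expRD; congr expR; lra.
rewrite exponential_pdfE; last lra.
rewrite split_exp [leRHS]mulrA [leLHS]mulrA (_ : 4 * (1 / 2) = 2 :> R); last lra.
apply: ler_wpM2r; first exact: expR_ge0.
by rewrite ler_pdivrMr ?expR_gt0 //; exact: le_trans pow_le lin_le_exp.
Qed.

Lemma Gamma_integral_ge (x : R) : 1 <= x ->
  ((expR (-2))%:E <= \int[lebesgue_measure]_(t in `]0%R, +oo[%classic)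
                        (t `^ (x - 1) * expR (- t))%:E)%E.
Proof.
move=> x1.
have mg := measurable_Gamma_integrand x.
have itv12 : lebesgue_measure `[1%R, 2%R]%classic = 1%E :> \bar R.
  rewrite lebesgue_measure_itv /= lte_fin ltr1n; congr EFin; lra.
apply: (@le_trans _ _ (\int[lebesgue_measure]_(t in `[1%R, 2%R]%classic)
                         (t `^ (x - 1) * expR (- t))%:E)%E); last first.
  apply: ge0_subset_integral => //.
  - by apply/measurable_EFinP; apply: measurable_funS mg.
  - by move=> t _; rewrite lee_fin mulr_ge0 ?powR_ge0 ?expR_ge0.
  - move=> t /=; rewrite !in_itv /= andbT => /andP[t1 _].
    exact: lt_le_trans t1.
rewrite -[leLHS]mule1 -itv12 -integral_cst //.
apply: ge0_le_integral => //.
- by move=> t _; rewrite lee_fin expR_ge0.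
- by apply/measurable_EFinP; apply: measurable_funS mg.
- move=> t /=; rewrite in_itv /= => /andP[t1 t2]; rewrite lee_fin.
  rewrite -[leLHS]mul1r; apply: ler_pM; rewrite ?ler01 ?expR_ge0 //.
    by rewrite -[leLHS](powRr0 t); apply: ler_powR => //; lra.
  by rewrite ler_expR; lra.
Qed.

Lemma Gamma_integral_le (x : R) : 1 <= x <= 2 ->
  (\int[lebesgue_measure]_(t in `]0%R, +oo[%classic)
     (t `^ (x - 1) * expR (- t))%:E <= 4%:E)%E.
Proof.
move=> x12.
have mpdf : measurable_fun (`]0%R, +oo[%classic : set R) (exponential_pdf (1 / 2)).
  exact: measurable_funS (measurable_exponential_pdf _).
apply: (@le_trans _ _ (\int[lebesgue_measure]_(t in `]0%R, +oo[%classic)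
                         (4%:E * (exponential_pdf (1 / 2) t)%:E))%E).
  apply: ge0_le_integral => //.
  - by move=> t _; rewrite lee_fin mulr_ge0 ?powR_ge0 ?expR_ge0.
  - by apply/measurable_EFinP; apply: measurable_funS (measurable_Gamma_integrand x).
  - by apply: emeasurable_funM => //; apply/measurable_EFinP.
  - move=> t /=; rewrite in_itv /= andbT => t0.
    by rewrite -EFinM lee_fin Gamma_integrand_le_exponential_pdf.
rewrite ge0_integralZl_EFin //; last 2 first.
- by move=> t _; rewrite lee_fin exponential_pdf_ge0.
- exact/measurable_EFinP.
rewrite -[leRHS]mule1 lee_pmul2l ?lte_fin //.
rewrite -(@integral_exponential_pdf R (1 / 2)) ?divr_gt0 //.
apply: ge0_subset_integral => //.
- by apply/measurable_EFinP; exact: measurable_exponential_pdf.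
- by move=> t _; rewrite lee_fin exponential_pdf_ge0.
Qed.

(* [Gamma] is [fine] of an extended-real integral, so positivity needs the
   integral to be finite as well as positive. *)
Lemma Gamma_gt0 (x : R) : 1 <= x <= 2 -> 0 < Gamma x.
Proof.
move=> x12; rewrite /Gamma.
set I := (\int[_]_(t in _) _)%E.
have I_ge : ((expR (-2))%:E <= I)%E by apply: Gamma_integral_ge; case/andP: x12.
have I_le : (I <= 4%:E)%E := Gamma_integral_le x12.
have I_fin : I \is a fin_num.
  by rewrite fin_numE; apply/andP; split; apply/eqP => I_oo; rewrite I_oo in I_ge I_le.
by apply: lt_le_trans (expR_gt0 (-2)) _; rewrite -lee_fin fineK.
Qed.

End GammaPositive.

Section Nonlinearity.
Variable R : realType.

Lemma is_derive_ln_comp (q : R -> R) (x dq : R) :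
  0 < q x -> is_derive x 1 q dq -> is_derive x 1 (fun y => ln (q y)) (dq / q x).
Proof.
move=> qx dqx.
have dq1 : derivable q x 1 by apply: ex_derive.
have dl : derivable (@ln R) (q x) 1 by apply: ex_derive; exact: is_derive1_ln.
apply: DeriveDef.
  by apply/derivable1_diffP; apply: differentiable_comp; exact/derivable1_diffP.
have := derive1_comp dq1 dl; rewrite !derive1E => ->.
have [_ ->] := is_derive1_ln qx.
by rewrite derive_val mulrC.
Qed.

Lemma is_derive_invD (a x : R) : a + x != 0 ->
  is_derive x 1 (fun y => (a + y)^-1) (- (a + x) ^- 2).
Proof.
move=> ax0.
have d : is_derive x 1 (fun y : R => a + y) (0 + 1) by apply: is_deriveD.
apply: DeriveDef; first exact/derivableV/ex_derive.
by rewrite deriveV ?(ex_derive d) // derive_val add0r /GRing.scale /= mulr1.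
Qed.

Lemma is_derive_fnl_DoubleWell (t tc x : R) :
  is_derive x 1 (fnl DoubleWell t tc) (dfnl DoubleWell t tc x).
Proof.
have d3 : is_derive x 1 (fun y : R => y ^+ 3) (3 * x ^+ 2).
  rewrite (_ : (fun y : R => y ^+ 3) = (@id R) ^+ 3); last first.
    by apply/funext=> y; rewrite exprfctE.
  have := is_deriveX 3 (is_derive_id x 1); move/is_derive_eq; apply.
  by rewrite /GRing.scale /= mulr1.
exact: is_deriveB.
Qed.

Lemma is_derive_fnl_FloryHuggins (t tc x : R) : -1 < x < 1 ->
  is_derive x 1 (fnl FloryHuggins t tc) (dfnl FloryHuggins t tc x).
Proof.
move=> /andP[x1 x2].
have p1 : 1 + x != 0 by rewrite lt0r_neq0 //; lra.
have p2 : 1 - x != 0 by rewrite lt0r_neq0 //; lra.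
have p3 : 1 - x ^+ 2 != 0 by rewrite lt0r_neq0 //; nra.
have dnum : is_derive x 1 (fun y : R => 1 - y) (0 - 1) by apply: is_deriveB.
have dq := is_deriveM dnum (is_derive_invD p1).
have q0 : 0 < (1 - x) * (1 + x)^-1 by apply: divr_gt0; lra.
have dln := @is_derive_ln_comp (fun y => (1 - y) / (1 + y)) _ _ q0 dq.
have := is_deriveD (is_deriveZ (t / 2) dln) (is_deriveZ tc (is_derive_id x 1)).
move/is_derive_eq; apply.
rewrite /GRing.scale /= mulr1.
by field; rewrite p1 p2 p3.
Qed.

Lemma lipschitz_of_derive_bound (f df : R -> R) (kappa beta : R) :
  (forall x : R, `|x| <= beta -> is_derive x 1 f (df x)) ->
  (forall x : R, `|x| <= beta -> `|df x| <= kappa) ->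
  forall a b, `|a| <= beta -> `|b| <= beta -> `|f a - f b| <= kappa * `|a - b|.
Proof.
move=> dfx df_le.
suff le_case a b : a <= b -> `|a| <= beta -> `|b| <= beta ->
    `|f b - f a| <= kappa * `|b - a|.
  move=> a b ha hb; have [ab|ba] := leP a b.
    by rewrite distrC (distrC a); apply: le_case.
  exact: le_case (ltW ba) hb ha.
move=> ab ha hb.
have in_ab x : x \in `[a, b] -> `|x| <= beta.
  move: ha hb; rewrite in_itv /= !ler_norml => /andP[? ?] /andP[? ?] /andP[? ?].
  by apply/andP; split; lra.
have [x xab ->] := MVT_segment ab (fun x hx => dfx x (in_ab x (subset_itv_oo_cc hx)))
  (derivable_within_continuous (fun x hx => @ex_derive _ _ _ _ _ _ _ (dfx x (in_ab x hx)))).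
by rewrite normrM ler_wpM2r // df_le // in_ab.
Qed.

Lemma fnl_lipschitz (c : nonlin) (t tc beta kappa : R) : nonlin_ok c t tc beta ->
  (forall x, -beta <= x <= beta -> `|dfnl c t tc x| <= kappa) ->
  forall a b, `|a| <= beta -> `|b| <= beta ->
  `|fnl c t tc a - fnl c t tc b| <= kappa * `|a - b|.
Proof.
move=> ok df_le; apply: lipschitz_of_derive_bound => x; rewrite ler_norml => hx.
  case: c ok df_le => /= [_ _|[_ [_ [_ [b1 _]]]] _]; first exact: is_derive_fnl_DoubleWell.
  by apply: is_derive_fnl_FloryHuggins; case/andP: hx => ? ?; apply/andP; split; lra.
exact: df_le.
Qed.

Lemma fnl_root (c : nonlin) (t tc beta : R) : nonlin_ok c t tc beta ->
  [/\ 0 < beta, fnl c t tc beta = 0 & fnl c t tc (- beta) = 0].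
Proof.
case: c => /= [->|[_ [_ [b0 [b1 fb]]]]]; first by split; [lra|ring|ring].
split => //; move: fb; rewrite /fnl => fb.
have -> : (1 - - beta) / (1 + - beta) = ((1 - beta) / (1 + beta))^-1.
  by rewrite invf_div; congr (_ / _); lra.
by rewrite lnV ?posrE ?divr_gt0 //; lra.
Qed.

End Nonlinearity.

Section StabilizedNonlinearity.
Variables (R : realDomainType) (f : R -> R) (kappa beta : R).
Hypothesis kappa_ge0 : 0 <= kappa.
Hypothesis f_lip : forall a b, `|a| <= beta -> `|b| <= beta ->
  `|f a - f b| <= kappa * `|a - b|.

Lemma stabilized_bound (p : R) : f beta = 0 -> f (- beta) = 0 ->
  `|p| <= beta -> `|f p + kappa * p| <= kappa * beta.
Proof.
move=> f_beta f_Nbeta p_le.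
have beta_ge0 : 0 <= beta := le_trans (normr_ge0 _) p_le.
have beta_le : `|beta| <= beta by rewrite ger0_norm.
have Nbeta_le : `|- beta| <= beta by rewrite normrN ger0_norm.
move: (p_le); rewrite ler_norml => /andP[p_lo p_hi].
have := f_lip p_le beta_le; rewrite f_beta subr0 distrC (ger0_norm (_ : 0 <= beta - p)); last lra.
rewrite ler_norml => /andP[_ f_up].
have := f_lip p_le Nbeta_le; rewrite f_Nbeta subr0 opprK (ger0_norm (_ : 0 <= p + beta)); last lra.
rewrite ler_norml => /andP[f_lo _].
by rewrite ler_norml; apply/andP; split; nra.
Qed.

Lemma stabilized_lipschitz (a b : R) : `|a| <= beta -> `|b| <= beta ->
  `|(f a + kappa * a) - (f b + kappa * b)| <= 2 * kappa * `|a - b|.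
Proof.
move=> a_le b_le.
rewrite (_ : _ - _ = (f a - f b) + kappa * (a - b)); last ring.
apply: le_trans (ler_normD _ _) _.
by rewrite normrM (ger0_norm kappa_ge0); have := f_lip a_le b_le; lra.
Qed.

End StabilizedNonlinearity.

Section GridNorm.
Variables (R : realType) (M : nat).

Lemma grid_periodic_shift (v : grid R) : grid_periodic M v ->
  forall (k : int) i j, v (i + k * M%:Z) j = v i j /\ v i (j + k * M%:Z) = v i j.
Proof.
move=> v_per.
have shift_nat (n : nat) i j :
    v (i + n%:Z * M%:Z) j = v i j /\ v i (j + n%:Z * M%:Z) = v i j.
  elim: n i j => [|n IH] i j; first by rewrite !mul0r !addr0.
  rewrite -addn1 PoszD mulrDl mul1r !addrA.
  by rewrite (v_per _ _).1 (v_per _ _).2 (IH i j).1 (IH i j).2.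
case=> [n|n] i j; first exact: shift_nat.
rewrite NegzE mulNr.
have := (shift_nat n.+1 (i - n.+1%:Z * M%:Z) j).1.
have := (shift_nat n.+1 i (j - n.+1%:Z * M%:Z)).2.
by rewrite !subrK => -> ->.
Qed.

Lemma grid_periodic_reduce (v : grid R) : grid_periodic M v -> (0 < M)%N ->
  forall i j, exists (a b : 'I_M), v i j = v (a.+1)%:Z (b.+1)%:Z.
Proof.
move=> v_per M_gt0 i j.
have reduce (x : int) : exists (a : 'I_M) (k : int), x = (a.+1)%:Z + k * M%:Z.
  have M_neq0 : M%:Z != 0 by rewrite eqz_nat -lt0n.
  have := modz_ge0 (x - 1) M_neq0.
  have := ltz_pmod (x - 1) (_ : 0 < M%:Z); rewrite ltz_nat => /(_ M_gt0).
  case E: ((x - 1) %% M%:Z)%Z => [r|r] // r_lt _.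
  exists (Ordinal (r_lt : (r < M)%N)), ((x - 1) %/ M%:Z)%Z => /=.
  have := divz_eq (x - 1) M%:Z; rewrite E -addn1 PoszD; lia.
have [a [k ->]] := reduce i; have [b [l ->]] := reduce j.
exists a, b.
by rewrite ((grid_periodic_shift v_per) k _ _).1 ((grid_periodic_shift v_per) l _ _).2.
Qed.

Lemma entry_le_normInf (v : grid R) : grid_periodic M v -> (0 < M)%N ->
  forall i j, `|v i j| <= normInf M v.
Proof.
move=> v_per M_gt0 i j; have [a [b ->]] := grid_periodic_reduce v_per M_gt0 i j.
apply: le_trans (le_bigmax _ _ a).
exact: (le_bigmax _ (fun b : 'I_M => `|v (a.+1)%:Z (b.+1)%:Z|) b).
Qed.

Lemma entry_le_of_normInf_le (v : grid R) (c : R) : grid_periodic M v -> (0 < M)%N ->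
  normInf M v <= c -> forall i j, `|v i j| <= c.
Proof. by move=> v_per M_gt0 v_le i j; apply: le_trans (entry_le_normInf v_per M_gt0 i j) v_le. Qed.

Lemma normInf_le (v : grid R) (c : R) : 0 <= c ->
  (forall i j, `|v i j| <= c) -> normInf M v <= c.
Proof. by move=> c_ge0 v_le; apply: bigmax_le => // a _; apply: bigmax_le. Qed.

Lemma normInf_ge0 (v : grid R) : 0 <= normInf M v.
Proof. exact: bigmax_ge_id. Qed.

Lemma grid_periodicB (u v : grid R) : grid_periodic M u -> grid_periodic M v ->
  grid_periodic M (fun i j => u i j - v i j).
Proof.
by move=> u_per v_per i j; rewrite /= (u_per i j).1 (v_per i j).1 (u_per i j).2 (v_per i j).2.
Qed.

Lemma normInf_absorb (v : grid R) (A k C : R) : 0 < A -> 0 <= k -> 0 <= C ->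
  (forall i j, (A + k) * `|v i j| <= C + k * normInf M v) -> A * normInf M v <= C.
Proof.
move=> A_gt0 k_ge0 C_ge0 v_le; set N := normInf M v.
have N_ge0 : 0 <= N := normInf_ge0 v.
have : N <= (C + k * N) / (A + k).
  apply: normInf_le; first by rewrite divr_ge0 ?addr_ge0 ?mulr_ge0 // ltW.
  by move=> i j; rewrite ler_pdivlMr ?ltr_wpDr // mulrC.
rewrite ler_pdivlMr ?ltr_wpDr //; lra.
Qed.

End GridNorm.

Section Limits.
Variable R : realType.

Lemma cvg_geometric_tail (K q : R) : 0 <= q < 1 ->
  K * q ^+ s / (1 - q) @[s --> \oo] --> 0.
Proof.
move=> /andP[q_ge0 q_lt1].
have := cvgMl_tmp (a := K / (1 - q)) (cvg_expr (_ : `|q| < 1)).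
rewrite ger0_norm // mulr0 => /(_ _ q_lt1); apply: cvg_trans.
by apply: near_eq_cvg; near=> s; rewrite mulrAC.
Unshelve. all: by end_near.
Qed.

Lemma geometric_cauchy (u : nat -> R) (K q : R) : 0 <= q < 1 ->
  (forall s, `|u s.+1 - u s| <= K * q ^+ s) ->
  cvgn u /\ forall s, `|u s - limn u| <= K * q ^+ s / (1 - q).
Proof.
move=> /andP[q_ge0 q_lt1] u_step.
have K_ge0 : 0 <= K by have := u_step 0%N; rewrite expr0 mulr1; exact: le_trans.
pose r s := K * q ^+ s / (1 - q).
have r_ge0 s : 0 <= r s by rewrite /r divr_ge0 ?mulr_ge0 ?exprn_ge0 //; lra.
have r_step s : r s - r s.+1 = K * q ^+ s by rewrite /r exprS; field; lra.
have r_cvg : r @ \oo --> 0 by apply: cvg_geometric_tail; rewrite q_ge0.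
have step_le s : - (K * q ^+ s) <= u s.+1 - u s <= K * q ^+ s by rewrite -ler_norml.
(* [u s + r s] decreases, [u s - r s] increases, and they squeeze each other. *)
pose a s := u s + r s; pose b s := u s - r s.
have a_dec : nonincreasing_seq a.
  by apply/nonincreasing_seqP => s; rewrite /a; have := step_le s; have := r_step s; lra.
have b_inc : nondecreasing_seq b.
  by apply/nondecreasing_seqP => s; rewrite /b; have := step_le s; have := r_step s; lra.
have b_le_a s t : b s <= a t.
  have [st|ts] := leqP s t.
    by have := b_inc _ _ st; rewrite /b /a; have := r_ge0 t; lra.
  by have := a_dec _ _ (ltnW ts); rewrite /b /a; have := r_ge0 s; lra.
have a_cvg : cvgn a.
  by apply: nonincreasing_is_cvgn => //; exists (b 0%N) => _ [s _ <-]; exact: b_le_a.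
have u_near s : `|u s - limn a| <= r s.
  rewrite ler_norml; apply/andP; split.
    by have := nonincreasing_cvgn_ge a_dec a_cvg s; rewrite /a; lra.
  have : b s <= limn a by apply: limr_ge => //; near=> t; exact: b_le_a.
  by rewrite /b; lra.
have u_cvg : u @ \oo --> limn a.
  apply/cvgrPdist_le => eps eps_gt0.
  move/cvgrPdist_le : r_cvg => /(_ eps eps_gt0); apply: filterS => s.
  by rewrite sub0r normrN (ger0_norm (r_ge0 s)) distrC; apply: le_trans.
have -> : limn u = limn a by apply: cvg_lim.
by split.
Unshelve. all: by end_near.
Qed.

Lemma cvg_lipschitz_on (f : R -> R) (kappa beta : R) (x : nat -> R) (l : R) :
  0 <= kappa ->
  (forall a b, `|a| <= beta -> `|b| <= beta -> `|f a - f b| <= kappa * `|a - b|) ->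
  (forall s, `|x s| <= beta) -> `|l| <= beta -> x @ \oo --> l ->
  f (x s) @[s --> \oo] --> f l.
Proof.
move=> kappa_ge0 f_lip x_le l_le /cvgrPdist_le x_cvg.
apply/cvgrPdist_le => eps eps_gt0.
have k1_gt0 : 0 < kappa + 1 by lra.
near=> s; apply: le_trans (f_lip _ _ l_le (x_le s)) _.
have : `|l - x s| <= eps / (kappa + 1) by near: s; apply: x_cvg; rewrite divr_gt0.
rewrite ler_pdivlMr // => near_le.
by have := normr_ge0 (l - x s); nra.
Unshelve. all: by end_near.
Qed.

Lemma cvg_lap (h : R) (w : nat -> grid R) (v : grid R) :
  (forall i j, w s i j @[s --> \oo] --> v i j) ->
  forall i j, lap h (w s) i j @[s --> \oo] --> lap h v i j.
Proof.
move=> w_cvg i j; rewrite /lap; apply: cvgMr_tmp.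
by apply: cvgB; [do 3 apply: cvgD => // | exact: cvgMl_tmp].
Qed.

End Limits.

Section FirstStepScheme.
Variable R : realType.

Definition mix (vs : R) (u z : grid R) : grid R :=
  fun i j => (1 - vs) * u i j + vs * z i j.

Definition nbr_sum (v : grid R) : grid R :=
  fun i j => v (i + 1) j + v (i - 1) j + v i (j + 1) + v i (j - 1).

(* One step of the linearized iteration, [w] being the previous iterate; the
   nonlinear first-step equation is the fixed-point case [w = u]. *)
Definition step_eq (B m e h kappa vs : R) (f : R -> R) (z u w : grid R) : Prop :=
  forall i j, B * (u i j - z i j) =
    m * (e ^+ 2 * lap h (mix vs u z) i j + f (mix vs w z i j)
         - kappa * (mix vs u z i j - mix vs w z i j)).

Lemma nbr_sum_le (v : grid R) (c : R) :
  (forall i j, `|v i j| <= c) -> forall i j, `|nbr_sum v i j| <= 4 * c.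
Proof.
move=> v_le i j; rewrite /nbr_sum.
have := ler_normD (v (i + 1) j + v (i - 1) j + v i (j + 1)) (v i (j - 1)).
have := ler_normD (v (i + 1) j + v (i - 1) j) (v i (j + 1)).
have := ler_normD (v (i + 1) j) (v (i - 1) j).
by have := v_le (i + 1) j; have := v_le (i - 1) j;
  have := v_le i (j + 1); have := v_le i (j - 1); lra.
Qed.

Lemma nbr_sumB (u v : grid R) i j :
  nbr_sum u i j - nbr_sum v i j = nbr_sum (fun i j => u i j - v i j) i j.
Proof. by rewrite /nbr_sum; ring. Qed.

Lemma mix_le (vs a b : R) (u z : grid R) : 0 <= vs <= 1 ->
  (forall i j, `|u i j| <= a) -> (forall i j, `|z i j| <= b) ->
  forall i j, `|mix vs u z i j| <= (1 - vs) * a + vs * b.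
Proof.
move=> /andP[vs_ge0 vs_le1] u_le z_le i j.
apply: le_trans (ler_normD _ _) _.
rewrite !normrM (ger0_norm vs_ge0) ger0_norm ?subr_ge0 //.
by apply: lerD; apply: ler_wpM2l; rewrite ?subr_ge0.
Qed.

Lemma mix_le_ball (vs b : R) (u z : grid R) : 0 <= vs <= 1 ->
  (forall i j, `|u i j| <= b) -> (forall i j, `|z i j| <= b) ->
  forall i j, `|mix vs u z i j| <= b.
Proof.
move=> vs_01 u_le z_le i j.
by apply: le_trans (mix_le vs_01 u_le z_le i j) _; rewrite -mulrDl subrK mul1r.
Qed.

Lemma mixB (vs : R) (u u' z : grid R) i j :
  mix vs u z i j - mix vs u' z i j = (1 - vs) * (u i j - u' i j).
Proof. by rewrite /mix; ring. Qed.

Variables (M : nat) (B m e h kappa vs beta : R) (f : R -> R).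
Hypotheses (M_gt0 : (0 < M)%N) (h_neq0 : h != 0).
Hypothesis f_lip : forall a b, `|a| <= beta -> `|b| <= beta ->
  `|f a - f b| <= kappa * `|a - b|.

Let a := e ^+ 2 / h ^+ 2.

Let a_ge0 : 0 <= a. Proof. by rewrite divr_ge0 ?sqr_ge0. Qed.

Lemma step_eq_nbr (z u w : grid R) : step_eq B m e h kappa vs f z u w ->
  forall i j, (B + m * (1 - vs) * (kappa + 4 * a)) * u i j =
    (B - m * vs * (kappa + 4 * a)) * z i j + m * a * nbr_sum (mix vs u z) i j
    + m * (f (mix vs w z i j) + kappa * mix vs w z i j).
Proof.
move=> st i j.
rewrite -[LHS]subr0 -(subrr (B * (u i j - z i j))) {2}st /lap /nbr_sum /mix /a.
by field.
Qed.

Lemma step_normInf_le (z u w : grid R) :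
  0 < m -> 0 <= kappa -> 0 < vs < 1 -> 0 < B -> m * vs * (kappa + 4 * a) <= B ->
  f beta = 0 -> f (- beta) = 0 -> grid_periodic M u ->
  (forall i j, `|z i j| <= beta) -> (forall i j, `|w i j| <= beta) ->
  step_eq B m e h kappa vs f z u w -> normInf M u <= beta.
Proof.
move=> m_gt0 kappa_ge0 /andP[vs_gt0 vs_lt1] B_gt0 B_ge f_beta f_Nbeta u_per z_le w_le st.
have vs_01 : 0 <= vs <= 1 by apply/andP; split; lra.
have beta_ge0 : 0 <= beta := le_trans (normr_ge0 _) (z_le 0 0).
set N := normInf M u.
have u_le : forall i j, `|u i j| <= N := entry_le_normInf u_per M_gt0.
have nbr_le i j : `|nbr_sum (mix vs u z) i j| <= 4 * ((1 - vs) * N + vs * beta).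
  by apply: nbr_sum_le; exact: mix_le.
have g_le i j : `|f (mix vs w z i j) + kappa * mix vs w z i j| <= kappa * beta.
  exact/stabilized_bound/mix_le_ball.
have mvk_ge0 : 0 <= m * (1 - vs) * kappa by rewrite !mulr_ge0 //; lra.
have mva_ge0 : 0 <= m * a * (1 - vs).
  by rewrite mulr_ge0 ?(mulr_ge0 (ltW m_gt0) a_ge0) //; lra.
have A_gt0 : 0 < B + m * (1 - vs) * kappa by lra.
rewrite -(ler_pM2l A_gt0).
apply: (normInf_absorb (k := 4 * (m * a * (1 - vs)))) => //.
- by rewrite mulr_ge0.
- by rewrite mulr_ge0 //; lra.
move=> i j.
have D_ge0 : 0 <= B + m * (1 - vs) * (kappa + 4 * a) by lra.
have := congr1 Num.norm (step_eq_nbr st i j); rewrite normrM (ger0_norm D_ge0) -/N.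
set X := _ * z i j; set Y := _ * nbr_sum _ i j; set Z := m * (f _ + _) => norm_eq.
have X_le : `|X| <= (B - m * vs * (kappa + 4 * a)) * beta.
  by rewrite normrM ger0_norm ?ler_wpM2l //; lra.
have Y_le : `|Y| <= m * a * (4 * ((1 - vs) * N + vs * beta)).
  have ma_ge0 : 0 <= m * a := mulr_ge0 (ltW m_gt0) a_ge0.
  by rewrite normrM ger0_norm ?ler_wpM2l.
have Z_le : `|Z| <= m * (kappa * beta).
  by rewrite normrM ger0_norm ?ler_wpM2l //; lra.
have := ler_normD (X + Y) Z; have := ler_normD X Y; lra.
Qed.

Lemma step_contraction (z u w u' w' : grid R) :
  0 < m -> 0 <= kappa -> 0 < vs < 1 -> 0 < B ->
  grid_periodic M u -> grid_periodic M u' -> grid_periodic M w -> grid_periodic M w' ->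
  (forall i j, `|z i j| <= beta) -> (forall i j, `|w i j| <= beta) ->
  (forall i j, `|w' i j| <= beta) ->
  step_eq B m e h kappa vs f z u w -> step_eq B m e h kappa vs f z u' w' ->
  (B + m * (1 - vs) * kappa) * normInf M (fun i j => u i j - u' i j) <=
  2 * m * kappa * (1 - vs) * normInf M (fun i j => w i j - w' i j).
Proof.
move=> m_gt0 kappa_ge0 /andP[vs_gt0 vs_lt1] B_gt0 u_per u'_per w_per w'_per z_le w_le w'_le st st'.
have vs_01 : 0 <= vs <= 1 by apply/andP; split; lra.
set N := normInf M _; set Nw := normInf M (fun i j => w i j - w' i j).
have du_le := entry_le_normInf (grid_periodicB u_per u'_per) M_gt0.
have dw_le := entry_le_normInf (grid_periodicB w_per w'_per) M_gt0.
have Nw_ge0 : 0 <= Nw := normInf_ge0 _ _.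
have nbr_le i j : `|nbr_sum (mix vs u z) i j - nbr_sum (mix vs u' z) i j| <= 4 * ((1 - vs) * N).
  rewrite nbr_sumB; apply: nbr_sum_le => {}i {}j.
  by rewrite mixB normrM ger0_norm ?ler_wpM2l ?du_le //; lra.
have g_le i j : `|(f (mix vs w z i j) + kappa * mix vs w z i j)
                 - (f (mix vs w' z i j) + kappa * mix vs w' z i j)| <= 2 * kappa * ((1 - vs) * Nw).
  apply: le_trans (stabilized_lipschitz kappa_ge0 f_lip _ _) _; try exact: mix_le_ball.
  by rewrite mixB normrM ger0_norm ?ler_wpM2l ?dw_le ?mulr_ge0 //; lra.
have mvk_ge0 : 0 <= m * (1 - vs) * kappa by rewrite !mulr_ge0 //; lra.
have mva_ge0 : 0 <= m * a * (1 - vs).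
  by rewrite mulr_ge0 ?(mulr_ge0 (ltW m_gt0) a_ge0) //; lra.
apply: (normInf_absorb (k := 4 * (m * a * (1 - vs)))) => //.
- by lra.
- by rewrite mulr_ge0.
- by rewrite !mulr_ge0 //; lra.
move=> i j.
have D_ge0 : 0 <= B + m * (1 - vs) * (kappa + 4 * a) by lra.
have diff_eq : (B + m * (1 - vs) * (kappa + 4 * a)) * (u i j - u' i j) =
    m * a * (nbr_sum (mix vs u z) i j - nbr_sum (mix vs u' z) i j)
    + m * ((f (mix vs w z i j) + kappa * mix vs w z i j)
           - (f (mix vs w' z i j) + kappa * mix vs w' z i j)).
  by rewrite [LHS]mulrBr (step_eq_nbr st) (step_eq_nbr st'); ring.
have := congr1 Num.norm diff_eq; rewrite normrM (ger0_norm D_ge0) -/N.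
set X := m * a * _; set Y := m * ((f _ + _) - _) => norm_eq.
have ma_ge0 : 0 <= m * a := mulr_ge0 (ltW m_gt0) a_ge0.
have X_le : `|X| <= m * a * (4 * ((1 - vs) * N)) by rewrite normrM ger0_norm ?ler_wpM2l.
have Y_le : `|Y| <= m * (2 * kappa * ((1 - vs) * Nw)).
  by rewrite normrM ger0_norm ?ler_wpM2l ?g_le // ltW.
have := ler_normD X Y; lra.
Qed.

Lemma step_eq_limit (z : grid R) (u : nat -> grid R) (v : grid R) :
  0 <= kappa -> 0 <= vs <= 1 ->
  (forall i j, `|z i j| <= beta) -> (forall s i j, `|u s i j| <= beta) ->
  (forall i j, `|v i j| <= beta) ->
  (forall i j, u s i j @[s --> \oo] --> v i j) ->
  (forall s, step_eq B m e h kappa vs f z (u s.+1) (u s)) ->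
  step_eq B m e h kappa vs f z v v.
Proof.
move=> kappa_ge0 vs_01 z_le u_le v_le u_cvg st i j.
have uS_cvg i' j' : u s.+1 i' j' @[s --> \oo] --> v i' j'.
  by have := u_cvg i' j'; rewrite -(cvg_shiftS (fun s => u s i' j')).
have mix_cvg (w : nat -> grid R) : (forall i j, w s i j @[s --> \oo] --> v i j) ->
    forall i j, mix vs (w s) z i j @[s --> \oo] --> mix vs v z i j.
  by move=> w_cvg i' j'; apply: cvgD; [exact: cvgMl_tmp | exact: cvg_cst].
have f_cvg : f (mix vs (u s) z i j) @[s --> \oo] --> f (mix vs v z i j).
  apply: cvg_lipschitz_on kappa_ge0 f_lip _ _ (mix_cvg _ u_cvg i j) => [s|];
    exact: mix_le_ball.
apply: norm_cvg_unique (cvgMl_tmp (a := B) (cvgB (uS_cvg i j) (cvg_cst (z i j)))) _.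
rewrite (_ : (fun s => _) = fun s => m * (e ^+ 2 * lap h (mix vs (u s.+1) z) i j
    + f (mix vs (u s) z i j) - kappa * (mix vs (u s.+1) z i j - mix vs (u s) z i j))).
  have mixS_cvg := mix_cvg (fun s => u s.+1) uS_cvg.
  apply: cvgMl_tmp; apply: cvgB.
    by apply: cvgD => //; apply: cvgMl_tmp; exact: cvg_lap mixS_cvg i j.
  by apply: cvgMl_tmp; apply: cvgB; [exact: mixS_cvg | exact: mix_cvg].
by apply/funext => s; exact: st.
Qed.

Lemma step_iterates_le (z : grid R) (u : nat -> grid R) :
  0 < m -> 0 <= kappa -> 0 < vs < 1 -> 0 < B -> m * vs * (kappa + 4 * a) <= B ->
  f beta = 0 -> f (- beta) = 0 -> (forall s, grid_periodic M (u s)) ->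
  (forall i j, `|z i j| <= beta) -> (forall i j, `|u 0%N i j| <= beta) ->
  (forall s, step_eq B m e h kappa vs f z (u s.+1) (u s)) ->
  forall s i j, `|u s i j| <= beta.
Proof.
move=> m_gt0 kappa_ge0 vs_01 B_gt0 B_ge f_beta f_Nbeta u_per z_le u0_le st.
elim=> [//|s IH] i j.
apply: le_trans (entry_le_normInf (u_per _) M_gt0 i j) _.
exact: step_normInf_le (st s).
Qed.

Lemma step_iterates_cvg (z : grid R) (u : nat -> grid R) :
  0 < m -> 0 <= kappa -> 0 < vs < 1 -> 0 < B -> m * (1 - vs) * kappa < B ->
  (forall s, grid_periodic M (u s)) ->
  (forall i j, `|z i j| <= beta) -> (forall s i j, `|u s i j| <= beta) ->
  (forall s, step_eq B m e h kappa vs f z (u s.+1) (u s)) ->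
  exists v : grid R, [/\ grid_periodic M v, forall i j, `|v i j| <= beta,
    normInf M (fun i j => u s i j - v i j) @[s --> \oo] --> 0 &
    step_eq B m e h kappa vs f z v v].
Proof.
move=> m_gt0 kappa_ge0 vs_01 B_gt0 B_gt u_per z_le u_le st.
case/andP: (vs_01) => vs_gt0 vs_lt1.
have mvk_ge0 : 0 <= m * (1 - vs) * kappa by rewrite !mulr_ge0 //; lra.
have A_gt0 : 0 < B + m * (1 - vs) * kappa by lra.
pose q := 2 * m * kappa * (1 - vs) / (B + m * (1 - vs) * kappa).
have q_01 : 0 <= q < 1.
  rewrite divr_ge0 ?ltr_pdivrMr ?mulr_ge0 //= ?(ltW A_gt0); lra.
have /andP[q_ge0 q_lt1] := q_01.
pose d s := normInf M (fun i j => u s.+1 i j - u s i j).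
have d_step s : d s.+1 <= q * d s.
  rewrite /q mulrAC ler_pdivlMr // mulrC.
  exact: step_contraction (st s.+1) (st s).
have d_le s : d s <= d 0%N * q ^+ s.
  elim: s => [|s IH]; first by rewrite expr0 mulr1.
  by apply: le_trans (d_step s) _; rewrite exprS mulrCA ler_wpM2l.
have u_cauchy i j := geometric_cauchy (u := fun s => u s i j) q_01
  (fun s => le_trans (entry_le_normInf (grid_periodicB (u_per _) (u_per _)) M_gt0 i j) (d_le s)).
pose v i j := limn (fun s => u s i j).
have v_near s i j : `|u s i j - v i j| <= d 0%N * q ^+ s / (1 - q) := (u_cauchy i j).2 s.
have v_le i j : `|v i j| <= beta.
  rewrite /v -lim_norm; last exact: (u_cauchy i j).1.
  apply: limr_le; last by near=> s; exact: u_le.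
  exact: is_cvg_norm (u_cauchy i j).1.
exists v; split => //.
- by move=> i j; split; congr (limn _); apply/funext => s; rewrite /= ?(u_per s i j).1 ?(u_per s i j).2.
- apply: (@squeeze_cvgr _ _ _ _ (fun _ => 0) (fun s => d 0%N * q ^+ s / (1 - q))).
  + near=> s; rewrite normInf_ge0 /=; apply: normInf_le; last exact: v_near.
    by rewrite divr_ge0 ?mulr_ge0 ?exprn_ge0 ?normInf_ge0 // subr_ge0 ltW.
  + exact: cvg_cst.
  + exact: cvg_geometric_tail.
- apply: (step_eq_limit kappa_ge0 _ z_le u_le v_le _ st) => [|i j].
    by apply/andP; split; lra.
  exact: (u_cauchy i j).1.
Unshelve. all: by end_near.
Qed.

Lemma step_eq_fixed_unique (z v v' : grid R) :
  0 < m -> 0 <= kappa -> 0 < vs < 1 -> 0 < B -> m * (1 - vs) * kappa < B ->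
  grid_periodic M v -> grid_periodic M v' ->
  (forall i j, `|z i j| <= beta) -> (forall i j, `|v i j| <= beta) ->
  (forall i j, `|v' i j| <= beta) ->
  step_eq B m e h kappa vs f z v v -> step_eq B m e h kappa vs f z v' v' -> v = v'.
Proof.
move=> m_gt0 kappa_ge0 vs_01 B_gt0 B_gt v_per v'_per z_le v_le v'_le st st'.
have := step_contraction m_gt0 kappa_ge0 vs_01 B_gt0 v_per v'_per v_per v'_per z_le v_le v'_le st st'.
set N := normInf M _ => N_le.
have N_ge0 : 0 <= N := normInf_ge0 _ _.
have N_le0 : N <= 0.
  have : (B - m * (1 - vs) * kappa) * N <= 0 by rewrite mulrBl; lra.
  by rewrite pmulr_rle0 // subr_gt0.
apply/funext => i; apply/funext => j; apply/eqP; rewrite -subr_eq0 -normr_le0.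
exact: le_trans (entry_le_normInf (grid_periodicB v_per v'_per) M_gt0 i j) N_le0.
Qed.

End FirstStepScheme.

Lemma first_step_iter_step_eq (R : realType) c theta thetac m eps alpha tau1 h kappa
    (phi0 : grid R) (phi : nat -> grid R) :
  first_step_iter c theta thetac m eps alpha tau1 h kappa phi0 phi -> forall s,
  step_eq (B10 alpha tau1) m eps h kappa (alpha / 2) (fnl c theta thetac) phi0 (phi s.+1) (phi s).
Proof. by case=> _ phi_step s i j; exact: phi_step. Qed.

Lemma first_step_eq_step_eq (R : realType) (kappa : R) c theta thetac m eps alpha tau1 h
    (phi0 psi : grid R) :
  first_step_eq c theta thetac m eps alpha tau1 h phi0 psi <->
  step_eq (B10 alpha tau1) m eps h kappa (alpha / 2) (fnl c theta thetac) phi0 psi psi.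
Proof.
by rewrite /first_step_eq /=; split=> psi_eq i j; have := psi_eq i j; rewrite subrr mulr0 subr0.
Qed.

Section TimeStep.
Variable R : realType.

Lemma powR_le_of_le_root (p t X : R) : 0 < p -> 0 <= t -> 0 <= X ->
  t <= X `^ (1 / p) -> t `^ p <= X.
Proof.
move=> p_gt0 t_ge0 X_ge0 t_le.
have := @ge0_ler_powR R p (ltW p_gt0) t (X `^ (1 / p)).
rewrite !nnegrE => /(_ t_ge0 (powR_ge0 _ _) t_le).
by rewrite -powRrM (_ : 1 / p * p = 1) ?powRr1 //; field; rewrite gt_eqF.
Qed.

Lemma B10_gt0 (alpha tau1 : R) : 0 < alpha < 1 -> 0 < tau1 -> 0 < B10 alpha tau1.
Proof.
move=> /andP[alpha_gt0 alpha_lt1] tau1_gt0.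
have G_gt0 : 0 < Gamma (2 - alpha) by apply: Gamma_gt0; apply/andP; split; lra.
by rewrite /B10 divr_gt0 ?mulr_gt0 ?powR_gt0 //; lra.
Qed.

(* The factor 11/8 > 1 absorbs (1 - alpha/2)^(1 - alpha) >= 1/2. *)
Lemma B10_gt (alpha tau1 Y : R) : 0 < alpha < 1 -> 0 < tau1 -> 0 <= Y ->
  tau1 <= (4 / (11 * Y * Gamma (2 - alpha))) `^ (1 / alpha) -> Y < B10 alpha tau1.
Proof.
move=> alpha_01 tau1_gt0 Y_ge0 tau1_le.
have B_gt0 := B10_gt0 alpha_01 tau1_gt0.
have [->//|Y_neq0] := eqVneq Y 0; case/andP: alpha_01 => alpha_gt0 alpha_lt1.
have Y_gt0 : 0 < Y by rewrite lt_neqAle eq_sym Y_neq0.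
have G_gt0 : 0 < Gamma (2 - alpha) by apply: Gamma_gt0; apply/andP; split; lra.
have X_gt0 : 0 < 4 / (11 * Y * Gamma (2 - alpha)) by rewrite !divr_gt0 ?mulr_gt0.
have tau_le := powR_le_of_le_root alpha_gt0 (ltW tau1_gt0) (ltW X_gt0) tau1_le.
have tau_gt0 : 0 < tau1 `^ alpha := powR_gt0 _ tau1_gt0.
have P_ge : 1 / 2 <= (1 - alpha / 2) `^ (1 - alpha).
  have : 1 - alpha / 2 <= (1 - alpha / 2) `^ (1 - alpha).
    by apply: ger1_powR; [apply/andP; split|]; lra.
  lra.
rewrite ler_pdivlMr ?mulr_gt0 // in tau_le.
rewrite /B10 ltr_pdivlMr ?mulr_gt0 //; nra.
Qed.

End TimeStep.

Unset Implicit Arguments. Set Strict Implicit.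

Theorem mainTheorem8 (R : realType) (c : nonlin) (theta thetac beta : R)
    (L m eps alpha kappa tau1 : R) (M : nat) (phi0 : grid R) (phi : nat -> grid R) :
  let vs := alpha / 2 in
  let h := L / M%:R in
  0 < L -> (0 < M)%N -> 0 < m -> 0 < eps -> 0 < alpha -> alpha < 1 ->
  0 < tau1 -> 0 <= kappa ->
  nonlin_ok c theta thetac beta ->
  (forall x, -beta <= x <= beta -> `| dfnl c theta thetac x | <= kappa) ->
  grid_periodic M phi0 -> normInf M phi0 <= beta ->
  (forall s, grid_periodic M (phi s)) ->
  first_step_iter c theta thetac m eps alpha tau1 h kappa phi0 phi ->
  tau1 <= (4 / (11 * vs * m * (kappa + 4 * eps ^+ 2 / h ^+ 2) * Gamma (2 - alpha)))
            `^ (1 / alpha) ->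
  (forall s : nat, (1 <= s)%N -> normInf M (phi s) <= beta) /\
  (tau1 <= (4 / (11 * kappa * (1 - vs) * m * Gamma (2 - alpha))) `^ (1 / alpha) ->
   exists phi1 : grid R,
     [/\ grid_periodic M phi1,
         (fun s => normInf M (fun i j => phi s i j - phi1 i j)) @ \oo --> (0 : R),
         first_step_eq c theta thetac m eps alpha tau1 h phi0 phi1,
         normInf M phi1 <= beta &
         forall psi : grid R, grid_periodic M psi -> normInf M psi <= beta ->
           first_step_eq c theta thetac m eps alpha tau1 h phi0 psi -> psi = phi1]).
Proof.
move=> vs h L_gt0 M_gt0 m_gt0 eps_gt0 alpha_gt0 alpha_lt1 tau1_gt0 kappa_ge0 ok df_le
  phi0_per phi0_le phi_per phi_iter tau1_le.
have [beta_gt0 f_beta f_Nbeta] := fnl_root ok.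
have f_lip := fnl_lipschitz ok df_le.
have alpha_01 : 0 < alpha < 1 by rewrite alpha_gt0.
have vs_01 : 0 < vs < 1 by apply/andP; split; rewrite /vs; lra.
have h_neq0 : h != 0 by rewrite gt_eqF // divr_gt0 ?ltr0n.
have B_gt0 := B10_gt0 alpha_01 tau1_gt0.
have st := first_step_iter_step_eq phi_iter.
have phi0_le' := entry_le_of_normInf_le phi0_per M_gt0 phi0_le.
have B_max_principle : m * vs * (kappa + 4 * (eps ^+ 2 / h ^+ 2)) < B10 alpha tau1.
  have Y_ge0 : 0 <= vs * m * (kappa + 4 * eps ^+ 2 / h ^+ 2).
    by rewrite !mulr_ge0 ?addr_ge0 ?divr_ge0 ?mulr_ge0 ?sqr_ge0 //; rewrite /vs; lra.
  move: tau1_le; rewrite -(mulrA 11) -(mulrA 11) => tau1_le.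
  by have := B10_gt alpha_01 tau1_gt0 Y_ge0 tau1_le; lra.
have phi_le : forall s i j, `|phi s i j| <= beta.
  apply: (step_iterates_le M_gt0 h_neq0 f_lip m_gt0 kappa_ge0 vs_01 B_gt0 (ltW B_max_principle)) => //.
  by case: phi_iter => -> _.
split=> [s _|tau1_le']; first exact: normInf_le (ltW beta_gt0) (phi_le s).
have B_contraction : m * (1 - vs) * kappa < B10 alpha tau1.
  have Y_ge0 : 0 <= kappa * (1 - vs) * m by rewrite !mulr_ge0 //; rewrite /vs; lra.
  move: tau1_le'; rewrite -(mulrA 11) -(mulrA 11) => tau1_le'.
  by have := B10_gt alpha_01 tau1_gt0 Y_ge0 tau1_le'; lra.
have [phi1 [phi1_per phi1_le phi1_cvg phi1_eq]] := step_iterates_cvg M_gt0 h_neq0 f_lip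
  m_gt0 kappa_ge0 vs_01 B_gt0 B_contraction phi_per phi0_le' phi_le st.
exists phi1; split => //; first exact/first_step_eq_step_eq/phi1_eq.
  exact: normInf_le (ltW beta_gt0) phi1_le.
move=> psi psi_per psi_le /(first_step_eq_step_eq kappa) psi_eq.
apply: (step_eq_fixed_unique M_gt0 h_neq0 f_lip m_gt0 kappa_ge0 vs_01 B_gt0 B_contraction
  psi_per phi1_per phi0_le' _ phi1_le psi_eq phi1_eq).
exact: entry_le_of_normInf_le psi_per M_gt0 psi_le.
Qed.
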